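(* Let $k\ge r\ge3$ and $p,t\ge 0$ be integers and let $\pi\in\mathbb{C}_{<}(k,r|p,t)$ with $\pi^{(2)}_p\ge 2t+6$. Then every part of $\pi$ equal to $2t+2$ or to $2t+4$ has mark at most $1$ in $GG(\pi)$.
   Context: A partition $\pi=(\pi_1,\dots,\pi_\ell)$ is a finite non-increasing sequence of positive integers; ''$a$ occurs in $\pi$'' means $a=\pi_i$ for some $i$. Göllnitz–Gordon marking: $GG(\pi)$ assigns a positive integer (mark) to each part, processing the parts from smallest to largest; $\pi_i$ receives the smallest positive integer different from the marks of all parts $\pi_g$ with $g>i$ and $\pi_i-\pi_g\le 2$, where $\pi_i-\pi_g<2$ is required when $\pi_i$ is odd. An ''$r$-marked part $a$'' is a part equal to $a$ with mark $r$. $N_i(\pi)$ is the number of parts with mark $i$; $\pi^{(i)}_1\ge\dots\ge\pi^{(i)}_{N_i(\pi)}$ are the parts with mark $i$, with $\pi^{(i)}_0=+\infty$, $\pi^{(i)}_{N_i(\pi)+1}=-\infty$. $\mathbb{C}(k,r)$: partitions with (i) no odd part repeated; (ii) $\pi_i\ge\pi_{i+k-1}+2$ for $1\le i\le\ell-k+1$, strict if $\pi_i$ even; (iii) at most $r-1$ parts $\le 2$. Starting types: for $\pi\in\mathbb{C}(k,r)$ with $N_2=N_2(\pi)\ge1$, let $l$ be the largest integer in $\{0,\dots,N_2\}$ such that no odd part of $\pi$ is $\ge\pi^{(2)}_l$; for $l<i\le N_2$, $\pi^{(2)}_i$ has type $s_{-1}$. For $b=1,\dots,l$ in increasing order, type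 and auxiliary $\sigma_b$: for $b=1$: Case 1: 1-marked part $\pi^{(2)}_1-1$ exists and $\pi^{(2)}_1+2$ does not occur: type $s_0$, $\sigma_1=\pi^{(2)}_1-1$; Case 2: 1-marked $\pi^{(2)}_1-2$ exists and $\pi^{(2)}_1+2$ does not occur: type $s_1$, $\sigma_1=\pi^{(2)}_1-2$; Case 3: 1-marked $\pi^{(2)}_1+2$ exists: type $s_2$, $\sigma_1=\pi^{(2)}_1+2$; Case 4: 1-marked $\pi^{(2)}_1$ exists: type $s_3$, $\sigma_1=\pi^{(2)}_1$. For $2\le b\le l$: Case 1: 1-marked $\pi^{(2)}_b-1$ exists and, if a 1-marked $\pi^{(2)}_b+2$ exists, $\sigma_{b-1}=\pi^{(2)}_b+2$: type $s_0$, $\sigma_b=\pi^{(2)}_b-1$; Case 2: same with $\pi^{(2)}_b-2$: type $s_1$, $\sigma_b=\pi^{(2)}_b-2$; Case 3: 1-marked $\pi^{(2)}_b+2$ exists and $\sigma_{b-1}\ne\pi^{(2)}_b+2$: type $s_2$, $\sigma_b=\pi^{(2)}_b+2$; Case 4: 1-marked $\pi^{(2)}_b$ exists: type $s_3$, $\sigma_b=\pi^{(2)}_b$. $\mathbb{C}_{<}(k,r|p,t)$: the set of $\pi\in\mathbb{C}(k,r)$ such that (1) no odd part is $\ge 2t+1$; (2) $\pi^{(2)}_{p+1}<2t+1<\pi^{(2)}_p$ (in particular $p\le N_2(\pi)$); (3) if $\pi^{(2)}_p=2t+2$ then it is of starting type $s_2$ or $s_3$; (4) if $\pi^{(2)}_{p+1}=2t$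 then it is of starting type $s_0$ or $s_1$. *)

From mathcomp Require Import all_boot.
Set Implicit Arguments. Unset Strict Implicit. Unset Printing Implicit Defensive.

(* A partition pi = (pi_1,...,pi_l) is stored as s : seq nat with
   pi_i = nth 0 s (i-1). *)
Definition is_partition (s : seq nat) : bool :=
  sorted geq s && all (fun a => 0 < a) s.

(* smallest positive integer not in L *)
Definition mex1 (L : seq nat) : nat :=
  (find (fun m => m.+1 \notin L) (iota 0 (size L).+1)).+1.

(* for b <= a: the part b is "close" to a (a - b <= 2, strict < 2 if a odd) *)
Definition gg_close (a b : nat) : bool :=
  if odd a then a - b < 2 else a - b <= 2.

(* acc: already processed (part, mark) pairs (all parts with larger index) *)
Definition gg_step (acc : seq (nat * nat)) (a : nat) : seq (nat * nat) :=
  rcons acc (a, mex1 [seq q.2 | q <- acc & gg_close a q.1]).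

(* marks aligned with s: nth 0 (gg_marks s) (i-1) is the mark of pi_i.
   Parts are processed from smallest (last index) to largest. *)
Definition gg_marks (s : seq nat) : seq nat :=
  rev [seq q.2 | q <- foldl gg_step [::] (rev s)].

Definition marked (s : seq nat) : seq (nat * nat) := zip s (gg_marks s).

Definition has1 (s : seq nat) (a : nat) : bool := (a, 1) \in marked s.

(* pi^{(i)}_1 >= ... >= pi^{(i)}_{N_i}: pi^{(i)}_j = nth 0 (mparts s i) (j-1) *)
Definition mparts (s : seq nat) (i : nat) : seq nat :=
  [seq q.1 | q <- marked s & q.2 == i].

Definition N (s : seq nat) (i : nat) : nat := size (mparts s i).

(* pi^{(2)}_j for 1 <= j <= N_2 *)
Definition pi2 (s : seq nat) (j : nat) : nat := nth 0 (mparts s 2) j.-1.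

(* extended comparisons, with pi^{(2)}_0 = +oo and pi^{(2)}_{N_2+1} = -oo *)
Definition lt_pi2 (s : seq nat) (x j : nat) : bool :=
  (j == 0) || ((j <= N s 2) && (x < pi2 s j)).
Definition le_pi2 (s : seq nat) (x j : nat) : bool :=
  (j == 0) || ((j <= N s 2) && (x <= pi2 s j)).
Definition pi2_lt (s : seq nat) (j x : nat) : bool :=
  (N s 2 < j) || (pi2 s j < x).

Definition in_C (k r : nat) (s : seq nat) : bool :=
  [&& is_partition s,
      all (fun a => odd a ==> (count_mem a s <= 1)) s,
      all (fun i => let a := nth 0 s i in let b := nth 0 s (i + k.-1) in
                    if odd a then b + 2 <= a else b + 2 < a)
          (iota 0 (size s - k.-1)) &
      count (fun a => a <= 2) s <= r.-1].

(* Sundef: none of the four cases applies (type not defined) *)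
Inductive stype := Sm1 | S0 | S1 | S2 | S3 | Sundef.


(* type of the 2-marked part x = pi^{(2)}_b, given whether b = 1 and
   sigma_{b-1}; cases are tried in the order Case 1, 2, 3, 4. *)
Definition type_step (s : seq nat) (first : bool) (sig : option nat)
    (x : nat) : stype * option nat :=
  let c12 := if first then (x + 2) \notin s
             else has1 s (x + 2) ==> (sig == Some (x + 2)) in
  let c3 := has1 s (x + 2) && (first || (sig != Some (x + 2))) in
  if has1 s (x - 1) && c12 then (S0, Some (x - 1))
  else if has1 s (x - 2) && c12 then (S1, Some (x - 2))
  else if c3 then (S2, Some (x + 2))
  else if has1 s x then (S3, Some x)
  else (Sundef, None).

Fixpoint types_aux (s : seq nat) (first : bool) (sig : option nat)
    (xs : seq nat) : seq stype :=
  match xs with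
  | [::] => [::]
  | x :: xs' => let: (ty, sg) := type_step s first sig x in
                ty :: types_aux s false sg xs'
  end.

Definition no_odd_ge (s : seq nat) (l : nat) : bool :=
  (l == 0) || all (fun a => ~~ odd a || (a < pi2 s l)) s.

Definition lstart (s : seq nat) : nat :=
  \max_(0 <= l < (N s 2).+1 | no_odd_ge s l) l.

Definition start_types (s : seq nat) : seq stype :=
  types_aux s true None (take (lstart s) (mparts s 2))
  ++ nseq (N s 2 - lstart s) Sm1.

Definition stype_of (s : seq nat) (b : nat) : stype :=
  nth Sundef (start_types s) b.-1.

Definition in_Clt (k r p t : nat) (s : seq nat) : Prop :=
  [/\ in_C k r s,
      all (fun a => odd a ==> (a < 2 * t + 1)) s,
      [&& p <= N s 2, pi2_lt s p.+1 (2 * t + 1) & lt_pi2 s (2 * t + 1) p],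
      (1 <= p <= N s 2) -> pi2 s p = 2 * t + 2 ->
        stype_of s p = S2 \/ stype_of s p = S3 &
      p.+1 <= N s 2 -> pi2 s p.+1 = 2 * t ->
        stype_of s p.+1 = S0 \/ stype_of s p.+1 = S1].

(* Suppose a part a in {2t+2, 2t+4} had mark m >= 2.  By the Göllnitz-Gordon
   rule every smaller mark is carried by a part b <= a with a - b <= 2 (a is
   even).  A 2-marked part is either >= pi^(2)_p >= 2t+6 or <= pi^(2)_{p+1} < 2t+1,
   so the 2-marked part near a forces a = 2t+2 and pi^(2)_{p+1} = 2t.  This part
   then has starting type s_0 or s_1: a 1-marked part 2t-1 or 2t-2 exists, which
   forbids a 1-marked 2t, and 2t+2 is not 1-marked (it is absent when p = 0, and
   otherwise sigma_p >= pi^(2)_p - 2 > 2t+2).  But the 1-marked part near a is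
   2t, 2t+1 or 2t+2, and the odd part 2t+1 is excluded by condition (1). *)

From mathcomp Require Import all_boot zify.
Set Implicit Arguments. Unset Strict Implicit. Unset Printing Implicit Defensive.

Lemma geq_trans : transitive geq.
Proof. exact: rev_trans leq_trans. Qed.

Lemma mex1_notin L : mex1 L \notin L.
Proof.
have hasP : has (fun m => m.+1 \notin L) (iota 0 (size L).+1).
  apply/negPn/negP => /hasPn noP.
  have sub : {subset iota 1 (size L).+1 <= L}.
    move=> m; rewrite mem_iota => hm.
    by have := noP m.-1; rewrite mem_iota negbK prednK; [apply|lia]; lia.
  by have := uniq_leq_size (iota_uniq 1 (size L).+1) sub; rewrite size_iota ltnn.
have := nth_find 0 hasP; rewrite nth_iota //.
by move: hasP; rewrite has_find size_iota.
Qed.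

Lemma mex1_min L m : 0 < m < mex1 L -> m \in L.
Proof.
rewrite /mex1 => /andP[m_gt0 lt_m].
have := find_size (fun m => m.+1 \notin L) (iota 0 (size L).+1).
rewrite size_iota => find_le.
have := @before_find _ 0 (fun m => m.+1 \notin L) (iota 0 (size L).+1) m.-1.
rewrite nth_iota; last by lia.
by rewrite add0n prednK // => /(_ lt_m) /negbFE.
Qed.

Lemma mex1_rev L : mex1 (rev L) = mex1 L.
Proof. by rewrite /mex1 size_rev; under eq_find => m do rewrite mem_rev. Qed.

Lemma size_foldl_gg_step acc xs :
  size (foldl gg_step acc xs) = size acc + size xs.
Proof.
elim: xs acc => [|x xs IH] acc /=; first by rewrite addn0.
by rewrite IH size_rcons addSnnS.
Qed.

Lemma size_gg_marks s : size (gg_marks s) = size s.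
Proof. by rewrite size_rev size_map size_foldl_gg_step size_rev. Qed.

Lemma unzip1_marked s : unzip1 (marked s) = s.
Proof. by rewrite unzip1_zip // size_gg_marks. Qed.

Lemma marked_cons x s :
  marked (x :: s) = (x, mex1 [seq q.2 | q <- marked s & gg_close x q.1]) :: marked s.
Proof.
have fst_acc acc xs : unzip1 (foldl gg_step acc xs) = unzip1 acc ++ xs.
  elim: xs acc => [|y xs IH] acc /=; first by rewrite cats0.
  by rewrite IH /gg_step /unzip1 map_rcons cat_rcons.
have acc_marked : foldl gg_step [::] (rev s) = rev (marked s).
  rewrite /marked /gg_marks rev_zip ?size_rev ?size_map ?size_foldl_gg_step ?size_rev //.
  set F := foldl _ _ _; have <- : unzip1 F = rev s := fst_acc [::] (rev s).
  by rewrite revK zip_unzip.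
rewrite {1}/marked /gg_marks rev_cons foldl_rcons acc_marked /gg_step.
rewrite map_rcons rev_rcons map_rev revK filter_rev map_rev mex1_rev /=.
by rewrite -[X in _ = _ :: X]zip_unzip unzip1_marked.
Qed.

Lemma mem_marked_part s a m : (a, m) \in marked s -> a \in s.
Proof. by move=> am; rewrite -(unzip1_marked s); apply/mapP; exists (a, m). Qed.

Lemma marked_nth s i :
  i < size s -> (nth 0 s i, nth 0 (gg_marks s) i) \in marked s.
Proof.
move=> lt_i; rewrite -nth_zip ?size_gg_marks //.
by apply: mem_nth; rewrite size_zip size_gg_marks minnn.
Qed.

Lemma marked_lower_mark s a m m' :
  sorted geq s -> (a, m) \in marked s -> 0 < m' < m ->
  exists2 b, (b, m') \in marked s & (b <= a) && gg_close a b.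
Proof.
elim: s => //= x s IH; rewrite (path_sortedE geq_trans) => /andP[x_ge s_sorted].
rewrite marked_cons in_cons => /orP[/eqP[-> ->] lt_m' | am lt_m'].
  have /mapP[[b m''] + /= ->] := mex1_min lt_m'.
  rewrite mem_filter /= => /andP[close_xb bm]; exists b; first by rewrite in_cons bm orbT.
  by rewrite close_xb andbT; apply: (allP x_ge); apply: mem_marked_part bm.
have [b bm' le_close] := IH s_sorted am lt_m'.
by exists b; rewrite // in_cons bm' orbT.
Qed.

Lemma marked_same_mark_far s a b m :
  sorted geq s -> (a, m) \in marked s -> (b, m) \in marked s -> b < a ->
  ~~ gg_close a b.
Proof.
elim: s => //= x s IH; rewrite (path_sortedE geq_trans) => /andP[x_ge s_sorted].
have ge_x c m' : (c, m') \in marked s -> c <= x.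
  by move=> cm; apply: (allP x_ge); apply: mem_marked_part cm.
rewrite !marked_cons !in_cons.
case/orP=> [/eqP[-> ->] | am] /orP[/eqP/(congr1 fst)/= -> | bm] lt_ba.
- by rewrite ltnn in lt_ba.
- apply: contra (mex1_notin [seq q.2 | q <- marked s & gg_close x q.1]) => close_xb.
  by apply/mapP; exists (b, mex1 [seq q.2 | q <- marked s & gg_close x q.1]);
    rewrite // mem_filter close_xb.
- by move: lt_ba; rewrite ltnNge (ge_x _ _ am).
- exact: IH.
Qed.

Lemma type_step_sigma s f sg x y : (type_step s f sg x).2 = Some y -> x <= y + 2.
Proof. by rewrite /type_step; repeat case: ifP => _ //=; case=> <-; lia. Qed.

Lemma type_step_S01 s f sg x :
  (type_step s f sg x).1 = S0 \/ (type_step s f sg x).1 = S1 ->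
  (has1 s (x - 1) || has1 s (x - 2)) &&
  (if f then x + 2 \notin s else has1 s (x + 2) ==> (sg == Some (x + 2))).
Proof.
rewrite /type_step; case: ifP => [/andP[-> ->] //|_].
case: ifP => [/andP[-> ->] | _]; first by rewrite orbT.
by case: ifP => _; [|case: ifP => _]; case.
Qed.

Lemma nth_types_aux s f sg xs j : j < size xs ->
  exists2 sg', nth Sundef (types_aux s f sg xs) j
                 = (type_step s (f && (j == 0)) sg' (nth 0 xs j)).1
             & if j is j'.+1 then forall y, sg' = Some y -> nth 0 xs j' <= y + 2
               else sg' = sg.
Proof.
elim: xs f sg j => [|x xs IH] f sg [|j] //= lt_j.
  by exists sg; rewrite // andbT; case: type_step.
case E: type_step => [ty sg1] /=.
have [sg' -> sg'_bound] := IH false sg1 j lt_j.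
exists sg'; first by rewrite andbF.
case: j {lt_j} sg'_bound => [-> y sg1_y | j //].
by apply: (@type_step_sigma s f sg); rewrite E.
Qed.

Lemma size_types_aux s f sg xs : size (types_aux s f sg xs) = size xs.
Proof. by elim: xs f sg => [|x xs IH] f sg //=; case: type_step => ty sg1 /=; rewrite IH. Qed.

Lemma start_type_S01 s b : 0 < b ->
  stype_of s b = S0 \/ stype_of s b = S1 ->
  [/\ has1 s (pi2 s b - 1) || has1 s (pi2 s b - 2),
      b = 1 -> pi2 s b + 2 \notin s &
      1 < b -> has1 s (pi2 s b + 2) -> pi2 s b.-1 <= pi2 s b + 4].
Proof.
case: b => // b _; rewrite /stype_of /start_types nth_cat size_types_aux /=.
case: ltnP => [lt_b | _]; last by rewrite nth_nseq; case: ifP => _ [].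
have lt_l : b < lstart s by move: lt_b; rewrite size_take_min; lia.
have pi2E j : j < lstart s -> pi2 s j.+1 = nth 0 (take (lstart s) (mparts s 2)) j.
  by move=> lt_j; rewrite nth_take.
have [sg' -> sg'_bound] := nth_types_aux s true None lt_b.
move/type_step_S01; rewrite -pi2E // => /andP[-> closing]; split => //.
  by case=> b0; move: closing; rewrite b0.
case: b lt_b lt_l sg'_bound closing pi2E => // b _ lt_l sg'_bound /implyP closing pi2E _.
by move/closing/eqP/sg'_bound; rewrite /= -pi2E //; lia.
Qed.

Lemma sorted_geq_mem_cut (xs : seq nat) n y :
  sorted geq xs -> n <= size xs -> y \in xs ->
  (0 < n /\ nth 0 xs n.-1 <= y) \/ (n < size xs /\ y <= nth 0 xs n).
Proof.
move=> xs_sorted le_n y_in; have le_nth := sorted_leq_nth geq_trans leqnn 0 xs_sorted.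
have lt_iy : index y xs < size xs by rewrite index_mem.
case: (ltnP (index y xs) n) => [lt_in | le_ni].
  left; split; first by lia.
  by rewrite -(nth_index 0 y_in); apply: le_nth; rewrite ?inE //; lia.
right; split; first by lia.
by rewrite -(nth_index 0 y_in); apply: le_nth; rewrite ?inE //; lia.
Qed.

Lemma sorted_mparts s i : sorted geq s -> sorted geq (mparts s i).
Proof.
move=> s_sorted; apply: (subseq_sorted geq_trans _ s_sorted).
by rewrite -{2}(unzip1_marked s); apply/map_subseq/filter_subseq.
Qed.

Lemma mem_mparts s y i : (y, i) \in marked s -> y \in mparts s i.
Proof. by move=> yi; apply/mapP; exists (y, i); rewrite // mem_filter eqxx. Qed.

Section ClassCLt.

Variables (k r p t : nat) (s : seq nat).
Hypothesis s_in : in_Clt k r p t s.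
Hypothesis pi2p_ge : le_pi2 s (2 * t + 6) p.

Lemma mark2_part_outside y : (y, 2) \in marked s ->
  2 * t + 6 <= y \/ [/\ p < N s 2, y <= pi2 s p.+1 & pi2 s p.+1 <= 2 * t].
Proof.
case: s_in => /and4P[/andP[s_sorted _] _ _ _] _ /and3P[le_pN pi2p1_lt _] _ _ y2.
have := sorted_geq_mem_cut (sorted_mparts 2 s_sorted) le_pN (mem_mparts y2).
case=> [[p_gt0 le_y] | [lt_p le_y]].
  by left; move: pi2p_ge; rewrite /le_pi2 /pi2 eqn0Ngt p_gt0 /=; lia.
by right; move: pi2p1_lt; rewrite /pi2_lt /pi2 /N ltnNge lt_p /= => lt_2t; split => //; lia.
Qed.

Lemma no_mark1_at_2t_2t2 : p < N s 2 -> pi2 s p.+1 = 2 * t ->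
  ~~ has1 s (2 * t) /\ ~~ has1 s (2 * t + 2).
Proof.
case: s_in => /and4P[/andP[s_sorted s_pos] _ _ _] _ _ _ type_p1 lt_pN pi2_eq.
have [] := start_type_S01 (ltn0Sn p) (type_p1 lt_pN pi2_eq).
rewrite pi2_eq => lower_mark1 p0_absent p_gt0_absent; split.
  apply/negP => mark1_2t.
  have [b b1 /andP[le_b lt_b]] : exists2 b, has1 s b & 2 * t - 2 <= b < 2 * t.
    case/orP: lower_mark1 => b1; [exists (2 * t - 1) | exists (2 * t - 2)] => //;
      have := allP s_pos _ (mem_marked_part b1); lia.
  apply: (negP (marked_same_mark_far s_sorted mark1_2t b1 lt_b)).
  by rewrite /gg_close oddM /=; lia.
apply/negP => mark1_2t2; case: (posnP p) => [p0 | p_gt0].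
  by move: (p0_absent (congr1 S p0)); rewrite (mem_marked_part mark1_2t2).
have := p_gt0_absent (p_gt0 : 1 < p.+1) mark1_2t2; move: pi2p_ge.
by rewrite /le_pi2 eqn0Ngt p_gt0 /=; lia.
Qed.

Lemma mark_le1_at_2t2_2t4 a m : (a, m) \in marked s ->
  a = 2 * t + 2 \/ a = 2 * t + 4 -> m <= 1.
Proof.
case: s_in => /and4P[/andP[s_sorted _] _ _ _] odd_small _ _ _ am a_eq.
rewrite leqNgt; apply/negP => m_gt1.
have close_a c : gg_close a c = (a - c <= 2).
  by rewrite /gg_close; case: a_eq => ->; rewrite oddD oddM.
have [y y2 /andP[le_ya]] : exists2 y, (y, 2) \in marked s & (y <= a) && gg_close a y.
  case: (ltngtP m 2) => [|lt_2m|m2]; first lia.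
    exact: marked_lower_mark s_sorted am (_ : 0 < 2 < m).
  by exists a; rewrite -?m2 // leqnn close_a subnn.
rewrite close_a => close_ay.
have [|[lt_pN le_y pi2_le]] := mark2_part_outside y2; first lia.
have [a_2t2 pi2_eq] : a = 2 * t + 2 /\ pi2 s p.+1 = 2 * t by lia.
have [no_2t no_2t2] := no_mark1_at_2t_2t2 lt_pN pi2_eq.
have [z z1 /andP[le_za]] := marked_lower_mark s_sorted am (m_gt1 : 0 < 1 < m).
rewrite close_a => close_az.
case: (ltngtP z (2 * t + 1)) => [lt_z | gt_z | z_odd].
- by move: no_2t; rewrite /has1 (_ : 2 * t = z) ?z1 //; lia.
- by move: no_2t2; rewrite /has1 (_ : 2 * t + 2 = z) ?z1 //; lia.
- have := allP odd_small _ (mem_marked_part z1).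
  by rewrite z_odd oddD oddM ltnn.
Qed.

End ClassCLt.

Theorem lemma2p4 (k r p t : nat) (s : seq nat) :
  3 <= r -> r <= k ->
  in_Clt k r p t s ->
  le_pi2 s (2 * t + 6) p ->
  forall i, i < size s ->
    (nth 0 s i = 2 * t + 2 \/ nth 0 s i = 2 * t + 4) ->
    nth 0 (gg_marks s) i <= 1.
Proof.
move=> _ _ s_in pi2p_ge i lt_i.
exact: (mark_le1_at_2t2_2t4 s_in pi2p_ge (marked_nth lt_i)).
Qed.
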